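(* For every integer $n \geq 5$, $\gamma_{b,2}(C_5 \square C_n) = n$.
   Context: For a graph $G$, a $2$-limited broadcast is a function $f: V(G) \to \{0,1,2\}$. A vertex $u$ hears the broadcast from $v$ if $f(v) > 0$ and $d(u,v) \leq f(v)$, where $d$ is the distance in $G$. The broadcast $f$ is dominating if every vertex of $G$ hears the broadcast from some vertex. The cost of $f$ is $\sum_{v \in V(G)} f(v)$. The $2$-limited broadcast domination number $\gamma_{b,2}(G)$ is the minimum cost of a $2$-limited dominating broadcast on $G$. $C_n$ denotes the cycle on $n$ vertices and $\square$ the Cartesian product of graphs. *)

From mathcomp Require Import all_boot.
Set Implicit Arguments. Unset Strict Implicit. Unset Printing Implicit Defensive.

Fixpoint ball (T : finType) (e : rel T) (k : nat) (u : T) : {set T} :=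
  match k with
  | 0 => [set u]
  | k'.+1 => ball e k' u :|: [set y | [exists x in ball e k' u, e x y]]
  end.

Definition broadcast2 (T : finType) := {ffun T -> 'I_3}.

Definition hears (T : finType) (e : rel T) (f : broadcast2 T) (u v : T) : bool :=
  (0 < f v) && (u \in ball e (f v) v).

Definition dominating (T : finType) (e : rel T) (f : broadcast2 T) : bool :=
  [forall u, exists v, hears e f u v].

Definition cost (T : finType) (f : broadcast2 T) : nat := \sum_(v : T) (f v : nat).

(* The default value 2*|V| is an upper bound for every cost, and the
   constant-1 broadcast is always dominating, so this is the true minimum. *)
Definition gamma_b2 (T : finType) (e : rel T) : nat :=
  \big[minn/(#|T|).*2]_(f : broadcast2 T | dominating e f) cost f.

Definition cycle_adj (n : nat) : rel 'I_n :=
  fun i j => (j == i.+1 %% n :> nat) || (i == j.+1 %% n :> nat).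

Definition cart_adj (T1 T2 : finType) (e1 : rel T1) (e2 : rel T2) : rel (T1 * T2) :=
  fun x y => ((x.1 == y.1) && e2 x.2 y.2) || ((x.2 == y.2) && e1 x.1 y.1).
Arguments cycle_adj n : clear implicits.

From mathcomp Require Import all_boot zify.
Set Implicit Arguments. Unset Strict Implicit. Unset Printing Implicit Defensive.

(* Write A_c and B_c for the numbers of 1s and 2s of a broadcast in column c
   of C_5 □ C_n. A column without a 2 can only be dominated from the columns at cycle
   distance at most 2, and counting how many of its vertices each broadcaster reaches gives
     5 <= 3 A_c + A_(c-1) + A_(c+1) + 3 B_(c-1) + 3 B_(c+1) + B_(c-2) + B_(c+2).
   Read the columns around the cycle with a finite automaton whose state records, capped
   at 5, the coverage already received by the last columns. A potential on the states
   satisfies  potential (next) + 1 <= potential + A + 2 B  along every step allowed by these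
   inequalities, and summing over one turn of the cycle gives n <= sum_c (A_c + 2 B_c),
   which is the cost. Repeated around the cycle, the four columns (2 in row 0, empty, 2 in row 2,
   empty) dominate every column at cost one per column; a closing block depending on n mod 4
   ends the cycle, and C_5 □ C_7 gets a pattern of its own. Domination of a column only
   depends on the five columns around it, and inserting a period into a word that starts
   with two periods creates no new cyclic window of length five, so finitely many words are
   checked by computation. *)

Lemma modn_lt_double n x : x < n + n -> x %% n = if x < n then x else x - n.
Proof.
move=> lt_x_2n; case: ltnP => [lt_xn|le_nx]; first by rewrite modn_small.
by rewrite -[in LHS](subnK le_nx) modnDr modn_small //; lia.
Qed.

Definition cycle_fwd (n x y : nat) := if y <= x then x - y else x + n - y.
Definition cycle_dist (n x y : nat) := minn (cycle_fwd n x y) (cycle_fwd n y x).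

Lemma cycle_adjE n (x y : 'I_n) :
  cycle_adj n x y = [|| y == x.+1 :> nat, (x.+1 == n) && (y == 0 :> nat),
                        x == y.+1 :> nat | (y.+1 == n) && (x == 0 :> nat)].
Proof.
have [xn yn] := (ltn_ord x, ltn_ord y).
rewrite /cycle_adj !modn_lt_double; try lia.
by do 2 case: ifP; move=> ? ?; apply/idP/idP; lia.
Qed.

Lemma cycle_adj_sym n : symmetric (cycle_adj n).
Proof. by move=> x y; rewrite /cycle_adj orbC. Qed.

Lemma cycle_dist_eq0 n (x y : 'I_n) : (cycle_dist n x y == 0) = (x == y).
Proof.
have [xn yn] := (ltn_ord x, ltn_ord y).
rewrite /cycle_dist /cycle_fwd -val_eqE /=; do 2 case: ifP => ?; apply/idP/idP; lia.
Qed.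

Lemma cycle_dist_adj n (x y w : 'I_n) :
  cycle_adj n x y -> cycle_dist n y w <= (cycle_dist n x w).+1.
Proof.
have [[xn yn] wn] := (ltn_ord x, ltn_ord y, ltn_ord w).
rewrite cycle_adjE /cycle_dist /cycle_fwd; do 4 case: ifP => ?; lia.
Qed.

Lemma cycle_dist_closer n (x w : 'I_n) : 0 < cycle_dist n x w ->
  exists2 y : 'I_n, cycle_adj n x y & cycle_dist n y w = (cycle_dist n x w).-1.
Proof.
have [xn wn] := (ltn_ord x, ltn_ord w).
move=> dpos; have [le_fwd|lt_bwd] := leqP (cycle_fwd n x w) (cycle_fwd n w x).
- have yn : (if x == 0 :> nat then n.-1 else x.-1) < n by case: ifP; lia.
  exists (Ordinal yn); rewrite ?cycle_adjE /=; move: le_fwd dpos;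
    rewrite /cycle_dist /cycle_fwd; have [x0|?] := eqVneq (x : nat) 0; rewrite ?x0 ?leq0n;
    repeat case: ifP => ?; lia.
- have yn : (if x.+1 == n then 0 else x.+1) < n by case: ifP; lia.
  exists (Ordinal yn); rewrite ?cycle_adjE /=; move: lt_bwd dpos;
    rewrite /cycle_dist /cycle_fwd; have [xn1|?] := eqVneq x.+1 n; rewrite ?xn1 /= ?leq0n;
    repeat case: ifP => ?; lia.
Qed.

Section Torus.
Variables m n : nat.
Local Notation torus := (cart_adj (cycle_adj m) (cycle_adj n)).

Definition torus_dist (u v : 'I_m * 'I_n) :=
  cycle_dist m u.1 v.1 + cycle_dist n u.2 v.2.

Lemma torus_dist_adj (x y v : 'I_m * 'I_n) :
  torus x y -> torus_dist y v <= (torus_dist x v).+1.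
Proof.
rewrite /torus_dist => /orP[] /andP[/eqP-> adj].
- by rewrite -addnS leq_add2l cycle_dist_adj.
- by rewrite -addSn leq_add2r cycle_dist_adj.
Qed.

Lemma torus_dist_closer (u v : 'I_m * 'I_n) : 0 < torus_dist u v ->
  exists2 y, torus y u & torus_dist y v = (torus_dist u v).-1.
Proof.
rewrite /torus_dist; have [d1|d1] := posnP (cycle_dist m u.1 v.1).
- rewrite d1 => d2; have [y adj dy] := cycle_dist_closer d2.
  exists (u.1, y); last by rewrite /= d1 dy !add0n.
  by rewrite /cart_adj /= eqxx cycle_adj_sym adj.
- have [y adj dy] := cycle_dist_closer d1.
  exists (y, u.2); last by rewrite /= dy; lia.
  by rewrite /cart_adj /= eqxx cycle_adj_sym adj orbT.
Qed.

Lemma mem_ball_torus k (u v : 'I_m * 'I_n) :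
  (u \in ball torus k v) = (torus_dist u v <= k).
Proof.
elim: k u => [|k IHk] u /=.
  by rewrite in_set1 leqn0 addn_eq0 !cycle_dist_eq0 -pair_eqE.
rewrite in_setU in_set IHk; apply/orP/idP => [[|/existsP[x /andP[]]]|].
- exact: leqW.
- by rewrite IHk => dx /(torus_dist_adj v) du; lia.
case: (leqP (torus_dist u v) k) => [le_k _|gt_k le_k1]; first by left.
right; have [y adj dy] := torus_dist_closer (leq_ltn_trans (leq0n k) gt_k).
by apply/existsP; exists y; rewrite IHk dy adj; lia.
Qed.

End Torus.

Lemma sum_le_on_support (I J : finType) (F : I -> nat) (g : J -> I) :
  (forall i, 0 < F i -> exists j, i = g j) -> \sum_i F i <= \sum_j F (g j).
Proof.
move=> supp; apply: (@leq_trans (\sum_i \sum_j (if i == g j then F i else 0))).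
  apply: leq_sum => i _; have [->|F_gt0] := posnP (F i); first exact: leq0n.
  by have [j ->] := supp i F_gt0; rewrite (bigD1 j) //= eqxx leq_addr.
rewrite exchange_big; apply: leq_sum => j _.
by rewrite -big_mkcond big_pred1_eq.
Qed.

Lemma sum_cycle5_ball (r0 : 'I_5) e : e <= 2 ->
  \sum_(r < 5) (cycle_dist 5 r r0 <= e) = e.*2.+1.
Proof.
by case: e => [|[|[|e]]] // _; case: r0 => [[|[|[|[|[|?]]]]] ?];
  rewrite // !big_ord_recr big_ord0.
Qed.

(* A broadcast of strength [k <= 2] at column distance [d <= k] reaches [2 (k - d) + 1]
   vertices of the column: a ball of radius [e <= 2] in C_5 has [2 e + 1] vertices. *)
Definition col_coverage (d k : nat) := if (0 < k) && (d <= k) then (k - d).*2.+1 else 0.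

Section ColumnDemand.
Variable n : nat.
Local Notation V := ('I_5 * 'I_n)%type.
Local Notation torus := (cart_adj (cycle_adj 5) (cycle_adj n)).

Variable f : broadcast2 V.

Definition col_count (k : nat) (c : 'I_n) := \sum_(r < 5) (f (r, c) == k :> nat).

Lemma col_count_le5 k c : col_count k c <= 5.
Proof.
rewrite -[X in _ <= X](card_ord 5) -sum1_card.
by apply: leq_sum => r _; case: (_ == _).
Qed.

Lemma sum_by_columns (F : V -> nat) :
  \sum_(v : V) F v = \sum_(c : 'I_n) \sum_(r < 5) F (r, c).
Proof. by rewrite exchange_big pair_big; apply: eq_bigr => -[]. Qed.

Lemma sum_column_by_value (G : nat -> nat) (c : 'I_n) : G 0 = 0 ->
  \sum_(r < 5) G (f (r, c)) = G 1 * col_count 1 c + G 2 * col_count 2 c.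
Proof.
move=> G0; rewrite /col_count !big_distrr -big_split /=; apply: eq_bigr => r _.
by case: (f (r, c)) => [[|[|[|k]]] //= _]; rewrite ?G0; lia.
Qed.

Lemma cost_by_columns :
  cost f = \sum_(c : 'I_n) (col_count 1 c + 2 * col_count 2 c).
Proof.
rewrite /cost sum_by_columns; apply: eq_bigr => c _.
by rewrite (@sum_column_by_value id) ?mul1n.
Qed.

Lemma sum_hears_column (j : 'I_n) (v : V) :
  \sum_(r < 5) hears torus f (r, j) v = col_coverage (cycle_dist n j v.2) (f v).
Proof.
rewrite /hears /col_coverage; under eq_bigr do rewrite mem_ball_torus /torus_dist /=.
case: (f v) => k /=; rewrite ltnS => k_le2.
have [_|k_gt0 /=] := posnP k; first by rewrite big1.
case: leqP => d_le.
- rewrite -(sum_cycle5_ball v.1); last lia.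
  by apply: eq_bigr => r _; congr nat_of_bool; apply/idP/idP; lia.
- by rewrite big1 // => r _; rewrite leqNgt (ltn_addl _ d_le).
Qed.

Lemma column_coverage_ge5 (j : 'I_n) : dominating torus f ->
  5 <= \sum_(c : 'I_n) \sum_(r < 5) col_coverage (cycle_dist n j c) (f (r, c)).
Proof.
move=> /forallP dom.
have -> : \sum_(c : 'I_n) \sum_(r < 5) col_coverage (cycle_dist n j c) (f (r, c))
        = \sum_(v : V) col_coverage (cycle_dist n j v.2) (f v).
  by rewrite sum_by_columns.
under eq_bigr do rewrite -sum_hears_column; rewrite exchange_big /=.
apply: (@leq_trans (\sum_(r < 5) 1)); first by rewrite sum1_card card_ord.
apply: leq_sum => r _.
by have /existsP[v heard] := dom (r, j); rewrite (bigD1 v) //= heard.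
Qed.

Hypothesis n_ge5 : 5 <= n.

Let n_gt0 : 0 < n. Proof. exact: leq_trans n_ge5. Qed.

Definition column (t : nat) : 'I_n := Ordinal (ltn_pmod t n_gt0).

Lemma cycle_dist_window t i : i < 5 ->
  cycle_dist n ((t + 2) %% n) ((t + i) %% n) = nth 0 [:: 2; 1; 0; 1; 2] i.
Proof.
rewrite -(modnDml t 2) -(modnDml t i); have := ltn_pmod t n_gt0.
move: (t %% n) => x xn i_lt5; rewrite !modn_lt_double; try lia.
have [h1|h1] := ltnP (x + 2) n; have [h2|h2] := ltnP (x + i) n;
  rewrite /cycle_dist /cycle_fwd;
  case: i i_lt5 h2 => [|[|[|[|[|i]]]]] //= _ h2; repeat case: ifP => ?; lia.
Qed.

Lemma near_column_window t (c : 'I_n) : cycle_dist n ((t + 2) %% n) c <= 2 ->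
  exists i : 'I_5, c = column (t + i).
Proof.
have cn := ltn_ord c; rewrite -(modnDml t 2); have := ltn_pmod t n_gt0.
move Ex : (t %% n) => x xn; rewrite modn_lt_double; last lia.
pose i := if x <= c then c - x else c + n - x.
have [h|h] := ltnP (x + 2) n; rewrite /cycle_dist /cycle_fwd => near.
all: have i_lt5 : i < 5 by move: near; rewrite /i; repeat case: ifP => ?; lia.
all: exists (Ordinal i_lt5); apply: val_inj; rewrite /= -modnDml Ex.
all: rewrite /i; case: ifP => ?; rewrite modn_lt_double; try case: ifP => ?; lia.
Qed.

Lemma column_demand t : dominating torus f -> col_count 2 (column (t + 2)) = 0 ->
  5 <= 3 * col_count 1 (column (t + 2)) + col_count 1 (column (t + 1))
       + col_count 1 (column (t + 3)) + 3 * col_count 2 (column (t + 1))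
       + 3 * col_count 2 (column (t + 3)) + col_count 2 (column t)
       + col_count 2 (column (t + 4)).
Proof.
move=> dom no2; apply: leq_trans (column_coverage_ge5 (column (t + 2)) dom) _.
under eq_bigr => c _ do rewrite sum_column_by_value //.
apply: leq_trans (@sum_le_on_support _ _ _ (fun i : 'I_5 => column (t + i)) _) _.
  move=> c; rewrite /col_coverage /=; case: (leqP (cycle_dist n _ c) 2).
    by move=> near _; apply: near_column_window.
  by move=> far; rewrite [_ <= 1]leqNgt (ltnW far) /= !mul0n.
rewrite !big_ord_recr big_ord0 /= !cycle_dist_window // no2.
by rewrite /col_coverage /= addn0; lia.
Qed.

End ColumnDemand.

Lemma leq_period_sum (p w : nat -> nat) t n :
  (forall s, p s.+1 + 1 <= p s + w s) -> p (t + n) = p t ->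
  n <= \sum_(i < n) w (t + i).
Proof.
move=> step periodic.
suff: p (t + n) + n <= p t + \sum_(i < n) w (t + i) by rewrite periodic leq_add2l.
elim: n {periodic} => [|k IHk]; first by rewrite big_ord0 !addn0.
rewrite big_ord_recr /= !addnS; move: (\sum_(i < k) w (t + i)) IHk => S IHk.
by have := step (t + k); lia.
Qed.

(* After reading the columns up to [c], the state [(U, P, Q, E)] holds, capped at 5: the
   coverage of column [c - 1] still missing only the [B_(c+1)] from column [c + 1]; the
   coverage of column [c] from columns up to [c]; the coverage of column [c + 1] from columns
   up to [c]; and [B_c], the coverage of column [c + 2] from column [c]. A column holding
   a 2 counts as fully covered. *)
Definition state := (nat * nat * nat * nat)%type.

Definition cap5 x := minn x 5.

Definition next_state (s : state) (a b : nat) : state :=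
  let: (U, P, Q, E) := s in
  (cap5 (P + a + 3 * b), if 0 < b then 5 else cap5 (Q + 3 * a),
   cap5 (a + 3 * b + E), cap5 b).

Definition relax (p : state -> nat) (s : state) : nat :=
  let: (U, _, _, _) := s in
  foldr maxn 0 [seq if 5 <= U + b then (p (next_state s a b)).+1 - (a + 2 * b) else 0
               | a <- iota 0 6, b <- iota 0 6].

(* [tabulate p] agrees with [p] on states with entries at most 5; it makes [vm_compute]
   evaluate each round of [potential] once. *)
Definition tabulate (p : state -> nat) : state -> nat :=
  let table := [seq [seq [seq [seq p (U, P, Q, E) | E <- iota 0 6] | Q <- iota 0 6]
                     | P <- iota 0 6] | U <- iota 0 6] in
  fun s => let: (U, P, Q, E) := s in nth 0 (nth [::] (nth [::] (nth [::] table U) P) Q) E.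

(* The least solution of [relax p <= p]: the largest excess of the number of columns over
   the cost along an allowed run of the automaton, reached after four rounds. *)
Definition potential : state -> nat := iter 4 (tabulate \o relax) (fun=> 0).

Definition relax_stable (p : state -> nat) :=
  all (fun U => all (fun P => all (fun Q => all (fun E =>
    relax p (U, P, Q, E) <= p (U, P, Q, E)) (iota 0 6)) (iota 0 6)) (iota 0 6)) (iota 0 6).

Lemma potential_relax_stable : relax_stable potential.
Proof. by vm_compute. Qed.

Lemma leq_foldr_maxn (s : seq nat) x : x \in s -> x <= foldr maxn 0 s.
Proof.
elim: s => //= y s IHs; rewrite inE leq_max => /orP[/eqP->|/IHs->];
  by rewrite ?leqnn ?orbT.
Qed.

Lemma potential_step U P Q E a b :
  U <= 5 -> P <= 5 -> Q <= 5 -> E <= 5 -> a <= 5 -> b <= 5 -> 5 <= U + b ->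
  potential (next_state (U, P, Q, E) a b) + 1 <= potential (U, P, Q, E) + (a + 2 * b).
Proof.
move=> hU hP hQ hE ha hb allowed.
have in6 x : x <= 5 -> x \in iota 0 6 by rewrite mem_iota; lia.
move: potential_relax_stable => /allP /(_ U (in6 _ hU)) /allP /(_ P (in6 _ hP)).
move=> /allP /(_ Q (in6 _ hQ)) /allP /(_ E (in6 _ hE)).
suff: (potential (next_state (U, P, Q, E) a b)).+1 - (a + 2 * b)
        <= relax potential (U, P, Q, E) by lia.
by apply: leq_foldr_maxn; apply/allpairsP; exists (a, b); rewrite /= allowed !in6.
Qed.

Section PeriodicDemand.
Variables (n : nat) (A B : nat -> nat).
Hypothesis n_ge4 : 4 <= n.
Hypotheses (A_periodic : forall t, A (t + n) = A t) (B_periodic : forall t, B (t + n) = B t).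
Hypotheses (A_le5 : forall t, A t <= 5) (B_le5 : forall t, B t <= 5).
Hypothesis demand : forall t, B (t + 2) = 0 ->
  5 <= 3 * A (t + 2) + A (t + 1) + A (t + 3) + 3 * B (t + 1) + 3 * B (t + 3) + B t + B (t + 4).

Definition column_state t : state :=
  (if 0 < B (t + 2) then 5
   else cap5 (3 * A (t + 2) + A (t + 1) + 3 * B (t + 1) + B t + A (t + 3) + 3 * B (t + 3)),
   if 0 < B (t + 3) then 5 else cap5 (3 * A (t + 3) + A (t + 2) + 3 * B (t + 2) + B (t + 1)),
   cap5 (A (t + 3) + 3 * B (t + 3) + B (t + 2)),
   cap5 (B (t + 3))).

Lemma column_state_next t :
  column_state t.+1 = next_state (column_state t) (A (t + 4)) (B (t + 4)).
Proof.
rewrite /column_state /next_state /cap5 !addnS /= !addn0.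
by congr (_, _, _, _); try case: ifP => _; lia.
Qed.

Lemma column_state_periodic t : column_state (t + n) = column_state t.
Proof.
have shift k : t + n + k = t + k + n by rewrite addnAC.
by rewrite /column_state !shift !(A_periodic, B_periodic).
Qed.

Lemma column_potential_step t :
  potential (column_state t.+1) + 1
    <= potential (column_state t) + (A (t + 4) + 2 * B (t + 4)).
Proof.
rewrite column_state_next; apply: potential_step; rewrite /cap5 ?A_le5 ?B_le5 //.
- by case: ifP; lia.
- by case: ifP; lia.
- lia.
- lia.
- case: posnP => [no2|]; last lia.
  by have := demand no2; lia.
Qed.

Lemma period_weight_ge : n <= \sum_(i < n) (A i + 2 * B i).
Proof.
have := leq_period_sum column_potential_step
  (congr1 potential (column_state_periodic (n - 4))).
congr (_ <= _); apply: eq_bigr => i _.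
have -> : n - 4 + i + 4 = i + n by lia.
by rewrite A_periodic B_periodic.
Qed.

End PeriodicDemand.

Lemma dominating_cost_ge n (f : broadcast2 ('I_5 * 'I_n)%type) : 5 <= n ->
  dominating (cart_adj (cycle_adj 5) (cycle_adj n)) f -> n <= cost f.
Proof.
move=> n_ge5 dom.
have col_periodic t : column n_ge5 (t + n) = column n_ge5 t.
  by apply: val_inj; rewrite /= modnDr.
have := @period_weight_ge n (fun t => col_count f 1 (column n_ge5 t))
  (fun t => col_count f 2 (column n_ge5 t)) (leq_trans (leqnSn 4) n_ge5)
  (fun t => congr1 _ (col_periodic t)) (fun t => congr1 _ (col_periodic t))
  (fun t => col_count_le5 _ _ _) (fun t => col_count_le5 _ _ _)
  (fun t => column_demand (t := t) dom).
move/leq_trans; apply; rewrite cost_by_columns; apply/eq_leq/eq_bigr => i _.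
by rewrite (_ : column n_ge5 i = i) //; apply: val_inj; rewrite /= modn_small.
Qed.

Section CyclicWindows.
Variable T : Type.

Definition window (l : nat) (w : seq T) (p : nat) := take l (drop p (w ++ w)).

Definition all_windows (l : nat) (P : pred (seq T)) (w : seq T) :=
  all (fun p => P (window l w p)) (iota 0 (size w)).

Lemma nth_window x0 l w p d : p < size w -> d < l <= size w ->
  nth x0 (window l w p) d = nth x0 w ((p + d) %% size w).
Proof.
move=> lt_p /andP[lt_d le_l]; rewrite nth_take // nth_drop nth_cat.
by rewrite modn_lt_double; [case: ifP | lia].
Qed.

Lemma take_drop_catl (s z : seq T) p l : p + l <= size s ->
  take l (drop p (s ++ z)) = take l (drop p s).
Proof. by move=> le_pl; rewrite !take_drop takel_cat // addnC. Qed.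

Lemma all_windows_pump l (P : pred (seq T)) u w : l <= (size u).+1 ->
  all_windows l P (u ++ u ++ w) -> all_windows l P (u ++ u ++ u ++ w).
Proof.
set x := u ++ u ++ w => le_l /allP good; apply/allP => p.
rewrite mem_iota add0n size_cat => lt_p; rewrite /window.
have size_x : size x = (size u + size u) + size w by rewrite /x !size_cat addnA.
have [lt_pu|le_up] := ltnP p (size u).
- have := good p; rewrite mem_iota /window; move/(_ (ltac:(lia))).
  have -> : x ++ x = (u ++ u) ++ (w ++ x) by rewrite /x !catA.
  have -> : (u ++ x) ++ u ++ x = (u ++ u) ++ (u ++ w ++ u ++ x) by rewrite /x !catA.
  move=> good_p; rewrite take_drop_catl ?size_cat; last lia.
  by rewrite take_drop_catl ?size_cat in good_p; last lia.
- have := good (p - size u); rewrite mem_iota /window; move/(_ (ltac:(lia))).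
  have -> : x ++ x = (x ++ u) ++ (u ++ w) by rewrite {2}/x !catA.
  have -> : (u ++ x) ++ u ++ x = u ++ ((x ++ u) ++ x) by rewrite !catA.
  have -> : drop p (u ++ (x ++ u) ++ x) = drop (p - size u) ((x ++ u) ++ x).
    by rewrite drop_cat ltnNge le_up.
  move=> good_p; rewrite take_drop_catl ?size_cat; last lia.
  by rewrite take_drop_catl ?size_cat in good_p; last lia.
Qed.

End CyclicWindows.

Definition word_broadcast n (w : seq (seq nat)) : broadcast2 ('I_5 * 'I_n)%type :=
  [ffun v : 'I_5 * 'I_n => inord (nth 0 (nth [::] w v.2) v.1)].

(* Every row [r0] of the middle column of [W] hears some row [r1] of some column [d] of [W];
   [nth 0 [:: 2; 1; 0; 1; 2] d] is the distance from column [d] to the middle one. *)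
Definition good_window (W : seq (seq nat)) :=
  all (fun r0 => has (fun d => has (fun r1 =>
    let k := nth 0 (nth [::] W d) r1 in
    (0 < k) && (cycle_dist 5 r0 r1 + nth 0 [:: 2; 1; 0; 1; 2] d <= k))
  (iota 0 5)) (iota 0 5)) (iota 0 5).

Definition valid_column (c : seq nat) := (size c == 5) && all (leq^~ 2) c.

Definition good_word n (w : seq (seq nat)) :=
  [&& size w == n, all valid_column w, sumn (map sumn w) == n & all_windows 5 good_window w].

Lemma sum_nth_ord (s : seq nat) k : size s = k -> \sum_(i < k) nth 0 s i = sumn s.
Proof. by move=> <-; rewrite sumnE (big_nth 0) big_mkord. Qed.

Section WordBroadcast.
Variables (n : nat) (w : seq (seq nat)).
Hypotheses (n_ge5 : 5 <= n) (w_good : good_word n w).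
Local Notation f := (word_broadcast n w).

Lemma word_broadcastE (v : 'I_5 * 'I_n) : f v = nth 0 (nth [::] w v.2) v.1 :> nat.
Proof.
rewrite ffunE inordK // ltnS; case/and4P: w_good => _ /allP cols _ _.
have [lt_c|ge_c] := ltnP v.2 (size w); last by rewrite (nth_default _ ge_c) nth_nil.
case/andP: (cols _ (mem_nth [::] lt_c)) => _ /allP le2.
have [lt_r|ge] := ltnP v.1 (size (nth [::] w v.2)); last by rewrite nth_default.
exact: le2 _ (mem_nth 0 lt_r).
Qed.

Lemma cost_word_broadcast : cost f = n.
Proof.
case/and4P: w_good => /eqP size_w /allP cols /eqP weight _.
transitivity (sumn (map sumn w)) => //.
rewrite /cost sum_by_columns -(sum_nth_ord (s := map sumn w) (k := n)) ?size_map //.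
apply: eq_bigr => c _; rewrite (nth_map [::]) ?size_w // -(sum_nth_ord (k := 5)).
  by apply: eq_bigr => r _; rewrite word_broadcastE.
have lt_c : c < size w by rewrite size_w.
by case/andP: (cols _ (mem_nth [::] lt_c)) => /eqP.
Qed.

Lemma word_broadcast_dominating : dominating (cart_adj (cycle_adj 5) (cycle_adj n)) f.
Proof.
case/and4P: w_good => /eqP size_w _ _ /allP windows; apply/forallP => -[r0 c0].
pose t := c0 + n - 2.
have lt_p : t %% n < size w by rewrite size_w ltn_mod; lia.
have := windows (t %% n); rewrite mem_iota lt_p => /(_ isT) /allP /(_ r0).
rewrite mem_iota ltn_ord => /(_ isT) /hasP[d]; rewrite mem_iota => /andP[_ lt_d5].
move=> /hasP[r1]; rewrite mem_iota => /andP[_ lt_r5].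
rewrite nth_window ?size_w; try lia.
rewrite /= modnDml => /andP[k_gt0 k_ge].
apply/existsP; exists (Ordinal lt_r5, column n_ge5 (t + d)).
rewrite /hears word_broadcastE /= k_gt0 mem_ball_torus /torus_dist /=.
have <- : (t + 2) %% n = c0 by rewrite /t subnK ?modnDr ?modn_small //; lia.
by rewrite cycle_dist_window.
Qed.

End WordBroadcast.

Definition empty_col : seq nat := nseq 5 0.

Definition period_block : seq (seq nat) :=
  [:: [:: 2; 0; 0; 0; 0]; empty_col; [:: 0; 0; 2; 0; 0]; empty_col].

Definition closing_block (s : nat) : seq (seq nat) :=
  match s with
  | 0 => [::]
  | 1 => [:: [:: 0; 0; 0; 0; 1]]
  | 2 => [:: [:: 2; 0; 0; 0; 0]; empty_col; empty_col; [:: 0; 0; 2; 2; 0]; empty_col; empty_col]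
  | _ => [:: [:: 1; 0; 0; 0; 0]; [:: 0; 0; 0; 0; 2]; empty_col; [:: 0; 2; 0; 0; 0];
            empty_col; [:: 0; 0; 0; 2; 0]; empty_col]
  end.

Fixpoint regular_word (k s : nat) : seq (seq nat) :=
  if k is k'.+1 then period_block ++ regular_word k' s else closing_block s.

Definition seven_word : seq (seq nat) :=
  [:: [:: 2; 0; 0; 0; 0]; empty_col; [:: 0; 0; 1; 0; 0]; [:: 0; 0; 0; 0; 1];
      [:: 0; 1; 0; 0; 0]; empty_col; [:: 0; 0; 0; 2; 0]].

Definition pattern (n : nat) : seq (seq nat) :=
  if n == 7 then seven_word
  else regular_word ((n - size (closing_block (n %% 4))) %/ 4) (n %% 4).

Lemma small_patterns_good : all (fun n => good_word n (pattern n)) (iota 5 11).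
Proof. by vm_compute. Qed.

Lemma regular_words_good_base :
  all (fun s => good_word (8 + size (closing_block s)) (regular_word 2 s)) (iota 0 4).
Proof. by vm_compute. Qed.

Lemma good_word_pump n w :
  good_word n (period_block ++ period_block ++ w) ->
  good_word (n + 4) (period_block ++ period_block ++ period_block ++ w).
Proof.
case/and4P=> /eqP size_w cols /eqP weight windows; apply/and4P; split.
- by rewrite size_cat size_w addnC.
- by rewrite all_cat cols andbT.
- by rewrite map_cat sumn_cat weight addnC.
- exact: all_windows_pump.
Qed.

Lemma regular_word_good j s : s < 4 ->
  good_word (4 * j.+2 + size (closing_block s)) (regular_word j.+2 s).
Proof.
move=> lt_s4; elim: j => [|j IHj].
  by move: regular_words_good_base => /allP/(_ s); rewrite mem_iota; apply.
have -> : 4 * j.+3 + size (closing_block s) = 4 * j.+2 + size (closing_block s) + 4.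
  by rewrite mulnS; lia.
exact: good_word_pump IHj.
Qed.

Lemma closing_block_size s : s < 4 ->
  size (closing_block s) %% 4 = s /\ size (closing_block s) <= 7.
Proof. by case: s => [|[|[|[|s]]]]. Qed.

Lemma pattern_good n : 5 <= n -> good_word n (pattern n).
Proof.
move=> n_ge5; have [lt_n16|ge_n16] := ltnP n 16.
  by move: small_patterns_good => /allP; apply; rewrite mem_iota; lia.
rewrite /pattern gtn_eqF; last lia.
have lt_s4 : n %% 4 < 4 by rewrite ltn_mod.
have [m_mod m_le7] := closing_block_size lt_s4.
have := regular_word_good ((n - size (closing_block (n %% 4))) %/ 4 - 2) lt_s4.
move: (size (closing_block (n %% 4))) m_mod m_le7 => m m_mod m_le7.
have -> : ((n - m) %/ 4 - 2).+2 = (n - m) %/ 4 by lia.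
by have -> : 4 * ((n - m) %/ 4) + m = n by lia.
Qed.

Lemma bigmin_le (I : eqType) (r : seq I) (P : pred I) (F : I -> nat) d i :
  i \in r -> P i -> \big[minn/d]_(j <- r | P j) F j <= F i.
Proof.
elim: r => [|j r IHr] //; rewrite inE big_cons => /orP[/eqP <-|i_r] Pi.
  by rewrite Pi geq_minl.
by case: ifP => _; rewrite ?geq_min IHr ?orbT.
Qed.

Theorem theorem4p5 (n : nat) (hn : 5 <= n) :
  gamma_b2 (cart_adj (cycle_adj 5) (cycle_adj n)) = n.
Proof.
have w_good := pattern_good hn.
apply/eqP; rewrite eqn_leq; apply/andP; split.
  rewrite -[X in _ <= X](cost_word_broadcast w_good).
  by apply: bigmin_le; rewrite ?mem_index_enum ?(word_broadcast_dominating hn w_good).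
apply: (big_ind (fun x => n <= x)) => [|x y|f].
- by rewrite card_prod !card_ord; lia.
- by rewrite leq_min => ->.
- exact: dominating_cost_ge.
Qed.
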